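(* Let $\theta(3)$ be the quiver with two vertices $1,2$ and three arrows $a,b,c$ from $1$ to $2$. Let $W\in\operatorname{Rep}(\theta(3),(3,3))$ be such that $W(a),W(b),W(c)$ are linearly independent skew-symmetric $3\times3$ matrices, and let $\sigma=(1,-1)$ (i.e. $\sigma(1)=1$, $\sigma(2)=-1$). Then $n\sigma\in S(W)$ for some integer $n\ge1$, but $\sigma\notin S(W)$; in particular $S(W)$ is not saturated.
   Context: Work over an algebraically closed field $k$ of characteristic zero. $\operatorname{Rep}(\theta(3),(3,3))$ is the space of triples of $3\times3$ matrices, acted on by $\operatorname{GL}_3\times\operatorname{GL}_3$ via $(g_1,g_2)\cdot W(a)=g_2W(a)g_1^{-1}$. $\operatorname{SI}_\sigma$ is the space of polynomial functions $f$ with $g\cdot f=\det(g_1)^{\sigma(1)}\det(g_2)^{\sigma(2)}f$, and $S(W)=\{\sigma\in\mathbb{Z}^2\mid \exists f\in\operatorname{SI}_\sigma,\ f(W)\neq0\}$. *)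

From HB Require Import structures.
From mathcomp Require Import all_boot all_order all_algebra.
Set Implicit Arguments. Unset Strict Implicit. Unset Printing Implicit Defensive.
Import Order.TTheory GRing.Theory Num.Theory.
Local Open Scope ring_scope.

(* A representation of theta(3) of dimension vector (3,3):
   arrows a,b,c are indexed by 'I_3 (a = 0, b = 1, c = 2). *)
Definition rep3 (k : Type) := 'I_3 -> 'M[k]_3.

(* Formal polynomial expressions in the 27 coordinate functions W(x)_{ij}. *)
Inductive pterm (k : Type) : Type :=
| PVar : 'I_3 -> 'I_3 -> 'I_3 -> pterm k
| PConst : k -> pterm k
| PAdd : pterm k -> pterm k -> pterm k
| PMul : pterm k -> pterm k -> pterm k.

Fixpoint peval (k : nzRingType) (t : pterm k) (W : rep3 k) : k :=
  match t with
  | PVar x i j => W x i j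
  | PConst c => c
  | PAdd t1 t2 => peval t1 W + peval t2 W
  | PMul t1 t2 => peval t1 W * peval t2 W
  end.

Definition is_polyfun (k : nzRingType) (f : rep3 k -> k) : Prop :=
  exists t : pterm k, forall W, f W = peval t W.

Definition act (k : fieldType) (g1 g2 : 'M[k]_3) (W : rep3 k) : rep3 k :=
  fun x => g2 *m W x *m invmx g1.

(* Semi-invariant of weight sigma: g . f = det(g1)^s1 det(g2)^s2 f,
   where (g . f)(W) = f(g^{-1} . W). *)
Definition semi_inv (k : fieldType) (sigma : int * int) (f : rep3 k -> k) : Prop :=
  is_polyfun f /\
  forall g1 g2 : 'M[k]_3, g1 \in unitmx -> g2 \in unitmx ->
    forall W : rep3 k,
      f (act (invmx g1) (invmx g2) W) =
      (\det g1) ^ sigma.1 * (\det g2) ^ sigma.2 * f W.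

Definition inS (k : fieldType) (W : rep3 k) (sigma : int * int) : Prop :=
  exists f : rep3 k -> k, semi_inv sigma f /\ f W != 0.

Definition skew_sym (k : nzRingType) (M : 'M[k]_3) : Prop := M^T = - M.

Definition lin_indep3 (k : fieldType) (W : rep3 k) : Prop :=
  forall c : 'I_3 -> k, \sum_(x < 3) c x *: W x = 0 -> forall x, c x = 0.

From HB Require Import structures.
From mathcomp Require Import all_boot all_order all_algebra fingroup perm ring.
Import Order.TTheory GRing.Theory Num.Theory.
Set Implicit Arguments. Unset Strict Implicit. Unset Printing Implicit Defensive.
Local Open Scope ring_scope.

(* - 2 sigma is in S(W): tradj V = tr (V b adj(V a) V b adj(V c)) is a
     semi-invariant of weight (2,-2), because adj (h X g) = adj g adj X adj h.
     Writing a skew matrix as the cross-product matrix of its axis, tradj W is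
     minus the squared determinant of the matrix of axes, which is invertible
     since the W x are linearly independent.
   - sigma is not in S(W): a semi-invariant f of weight (1,-1) satisfies
     f (h V g) = det h det g f V.  Being homogeneous and polynomial, f is
     additive in each row of the triple, so f V is a sum over the choices
     a : rows -> arrows of c(a) det (rowmix a V), where rowmix a V takes its
     row i from V (a i) and c(a) is invariant under permuting the rows.  For a
     skew triple each of these determinants has only two cyclic terms, and the
     sum cancels. *)

Section PolynomialFunctions.
Variable R : comNzRingType.
Implicit Types (f g : rep3 R -> R) (V U : rep3 R).

Lemma polyfun_ext f V V' : is_polyfun f ->
  (forall x i j, V x i j = V' x i j) -> f V = f V'.
Proof.
case=> t ht eqV; rewrite !ht.
by elim: t {ht} => //= [t1 IH1 t2 IH2|t1 IH1 t2 IH2]; rewrite IH1 IH2.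
Qed.

Lemma polyfun_eq f g : (forall V, f V = g V) -> is_polyfun g -> is_polyfun f.
Proof. by move=> eq_fg [t ht]; exists t => V; rewrite eq_fg ht. Qed.

Lemma polyfun_const c : is_polyfun (fun _ : rep3 R => c).
Proof. by exists (PConst c). Qed.

Lemma polyfun_var x i j : is_polyfun (fun V : rep3 R => V x i j).
Proof. by exists (PVar R x i j). Qed.

Lemma polyfun_add f g : is_polyfun f -> is_polyfun g -> is_polyfun (fun V => f V + g V).
Proof. by move=> [t1 h1] [t2 h2]; exists (PAdd t1 t2) => V /=; rewrite h1 h2. Qed.

Lemma polyfun_mul f g : is_polyfun f -> is_polyfun g -> is_polyfun (fun V => f V * g V).
Proof. by move=> [t1 h1] [t2 h2]; exists (PMul t1 t2) => V /=; rewrite h1 h2. Qed.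

Lemma polyfun_sub f g : is_polyfun f -> is_polyfun g -> is_polyfun (fun V => f V - g V).
Proof.
move=> pf pg; apply: (@polyfun_eq _ (fun V => f V + (-1) * g V)) => [V|].
  by rewrite mulN1r.
by apply: polyfun_add pf (polyfun_mul (polyfun_const _) pg).
Qed.

Lemma polyfun_comp g (L : rep3 R -> rep3 R) : is_polyfun g ->
  (forall x i j, is_polyfun (fun V => L V x i j)) -> is_polyfun (fun V => g (L V)).
Proof.
move=> [t ht] pL; apply: (@polyfun_eq _ (fun V => peval t (L V))) => [V|].
  by rewrite ht.
elim: t {ht} => /= [x i j|c|t1 IH1 t2 IH2|t1 IH1 t2 IH2].
- exact: pL.
- exact: polyfun_const.
- exact: polyfun_add.
- exact: polyfun_mul.
Qed.

Lemma polyfun_sum (I : Type) (r : seq I) (P : pred I) (F : I -> rep3 R -> R) :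
  (forall i, is_polyfun (F i)) -> is_polyfun (fun V => \sum_(i <- r | P i) F i V).
Proof.
move=> pF; elim: r => [|a r IH].
  by apply: polyfun_eq (polyfun_const 0) => V; rewrite big_nil.
case Pa: (P a).
- by apply: polyfun_eq (polyfun_add (pF a) IH) => V; rewrite big_cons Pa.
- by apply: polyfun_eq IH => V; rewrite big_cons Pa.
Qed.

Lemma polyfun_prod (I : Type) (r : seq I) (P : pred I) (F : I -> rep3 R -> R) :
  (forall i, is_polyfun (F i)) -> is_polyfun (fun V => \prod_(i <- r | P i) F i V).
Proof.
move=> pF; elim: r => [|a r IH].
  by apply: polyfun_eq (polyfun_const 1) => V; rewrite big_nil.
case Pa: (P a).
- by apply: polyfun_eq (polyfun_mul (pF a) IH) => V; rewrite big_cons Pa.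
- by apply: polyfun_eq IH => V; rewrite big_cons Pa.
Qed.

Definition polyfun_mx m n (A : rep3 R -> 'M[R]_(m, n)) : Prop :=
  forall i j, is_polyfun (fun V => A V i j).

Lemma polyfun_mx_var x : polyfun_mx (fun V : rep3 R => V x).
Proof. by move=> i j; apply: polyfun_var. Qed.

Lemma polyfun_mx_const m n (A : 'M[R]_(m, n)) : polyfun_mx (fun _ => A).
Proof. by move=> i j; apply: polyfun_const. Qed.

Lemma polyfun_mx_mul m n p (A : rep3 R -> 'M[R]_(m, n)) (B : rep3 R -> 'M[R]_(n, p)) :
  polyfun_mx A -> polyfun_mx B -> polyfun_mx (fun V => A V *m B V).
Proof.
move=> pA pB i j; apply: (@polyfun_eq _ (fun V => \sum_l A V i l * B V l j)) => [V|].
  by rewrite mxE.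
by apply: polyfun_sum => l; apply: polyfun_mul.
Qed.

Lemma polyfun_det n (A : rep3 R -> 'M[R]_n) :
  polyfun_mx A -> is_polyfun (fun V => \det (A V)).
Proof.
move=> pA; apply: polyfun_sum => s.
by apply: polyfun_mul; [apply: polyfun_const | apply: polyfun_prod => i; apply: pA].
Qed.

Lemma polyfun_mx_adj n (A : rep3 R -> 'M[R]_n) :
  polyfun_mx A -> polyfun_mx (fun V => \adj (A V)).
Proof.
move=> pA i j; apply: (@polyfun_eq _ (fun V => cofactor (A V) j i)) => [V|].
  by rewrite mxE.
apply: polyfun_mul; first exact: polyfun_const.
apply: polyfun_det => a b.
by apply: (@polyfun_eq _ (fun V => A V (lift j a) (lift i b))) => [V|]; rewrite ?mxE.
Qed.

Lemma polyfun_trace n (A : rep3 R -> 'M[R]_n) :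
  polyfun_mx A -> is_polyfun (fun V => \tr (A V)).
Proof. by move=> pA; apply: polyfun_sum => i; apply: pA. Qed.

Fixpoint pterm_poly (t : pterm R) : pterm {poly R} :=
  match t with
  | PVar x i j => PVar _ x i j
  | PConst c => PConst c%:P
  | PAdd t1 t2 => PAdd (pterm_poly t1) (pterm_poly t2)
  | PMul t1 t2 => PMul (pterm_poly t1) (pterm_poly t2)
  end.

Lemma horner_pterm_poly t (P : rep3 {poly R}) s :
  (peval (pterm_poly t) P).[s] = peval t (fun x => map_mx (horner^~ s) (P x)).
Proof.
elim: t => /= [x i j|c|t1 IH1 t2 IH2|t1 IH1 t2 IH2].
- by rewrite mxE.
- by rewrite hornerC.
- by rewrite hornerD IH1 IH2.
- by rewrite hornerM IH1 IH2.
Qed.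

Lemma polyfun_line f V U : is_polyfun f ->
  exists p : {poly R}, forall s, p.[s] = f (fun x => V x + s *: U x).
Proof.
move=> pf; have [t ht] := pf.
exists (peval (pterm_poly t) (fun x => map_mx polyC (V x) + 'X *: map_mx polyC (U x))).
move=> s; rewrite horner_pterm_poly -ht; apply: polyfun_ext => // x i j.
by rewrite !mxE hornerD hornerC hornerM hornerX hornerC.
Qed.

End PolynomialFunctions.

Arguments polyfun_var {R} x i j.
Arguments polyfun_mx_var {R} x.

(* The adjugate reverses products of invertible matrices, since then
   A * adj A = det A. *)
Lemma adjM_unit (R : comUnitRingType) n (A B : 'M[R]_n.+1) :
  A \in unitmx -> B \in unitmx -> \adj (A *m B) = \adj B *m \adj A.
Proof.
move=> uA uB; have uAB : A *m B \in unitmx by rewrite unitmx_mul uA uB.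
apply: (can_inj (mulKmx uAB)); rewrite mul_mx_adj -mulmxA (mulmxA B) mul_mx_adj.
by rewrite mul_scalar_mx -scalemxAr mul_mx_adj scale_scalar_mx det_mulmx mulrC.
Qed.

Section Density.
Variable k : fieldType.
Hypothesis k_char0 : [pchar k] =i pred0.

Lemma natr_inj_char0 : injective (fun n : nat => n%:R : k).
Proof.
move=> m n /= eq_mn; apply/eqP.
wlog le_mn : m n eq_mn / (m <= n)%N.
  by move=> wlog_le; case: (leqP m n) => [|/ltnW] le; [|rewrite eq_sym]; apply: wlog_le.
by rewrite eqn_leq le_mn /= -subn_eq0 -(iffLR (pcharf0P k) k_char0) natrB // eq_mn subrr.
Qed.

Lemma poly_eq0_nonzero (p : {poly k}) : (forall s, s != 0 -> p.[s] = 0) -> p = 0.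
Proof.
move=> p0; apply: (@roots_geq_poly_eq0 _ p [seq i.+1%:R | i <- iota 0 (size p)]).
- apply/allP => _ /mapP [i _ ->]; apply/rootP/p0.
  by rewrite (iffLR (pcharf0P k) k_char0).
- by rewrite map_inj_uniq ?iota_uniq // => m n /natr_inj_char0 [].
- by rewrite size_map size_iota.
Qed.

Lemma horner_char_poly_opp (A : 'M[k]_3) s : (char_poly (- A)).[s] = \det (A + s%:M).
Proof.
rewrite -horner_evalE -det_map_mx; congr (\det _); apply/matrixP => i j.
by rewrite !mxE /= horner_evalE hornerD hornerN hornerMn hornerX hornerC opprK addrC.
Qed.

(* Along the line V + s*e_x the function times det (V x + s) vanishes, and the
   latter is a monic (characteristic) polynomial in s. *)
Lemma polyfun_dense (F : rep3 k -> k) x : is_polyfun F ->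
  (forall V, V x \in unitmx -> F V = 0) -> forall V, F V = 0.
Proof.
move=> pF F0 V.
pose E : rep3 k := fun b => if b == x then 1%:M else 0.
have [p hp] := polyfun_line V E pF.
have p_char_eq0 : p * char_poly (- V x) = 0.
  apply: poly_eq0_nonzero => s _; rewrite hornerM horner_char_poly_opp.
  have [->|det_nz] := eqVneq (\det (V x + s%:M)) 0; first by rewrite mulr0.
  by rewrite hp F0 ?mul0r // /E eqxx scale_scalar_mx mulr1 unitmxE unitfE det_nz.
have p0 : p = 0.
  move/eqP: p_char_eq0; rewrite mulf_eq0 orbC.
  by rewrite (negbTE (monic_neq0 (char_poly_monic _))) => /eqP.
have := hp 0; rewrite p0 horner0 => ->; apply: polyfun_ext => // b i j.
by rewrite scale0r addr0.
Qed.

(* By density, the adjugate reverses all products of 3 x 3 matrices: the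
   identity extends from invertible A and B, one factor at a time. *)
Lemma adjM3 (A B : 'M[k]_3) : \adj (A *m B) = \adj B *m \adj A.
Proof.
have extend (L1 L2 : rep3 k -> 'M[k]_3) : polyfun_mx L1 -> polyfun_mx L2 ->
    (forall V, V 0 \in unitmx -> \adj (L1 V *m L2 V) = \adj (L2 V) *m \adj (L1 V)) ->
    forall V, \adj (L1 V *m L2 V) = \adj (L2 V) *m \adj (L1 V).
  move=> p1 p2 L_unit V; apply/matrixP => i j; apply/eqP; rewrite -subr_eq0; apply/eqP.
  move: V; apply: (polyfun_dense (x := 0)) => [|V uV]; last by rewrite L_unit ?subrr.
  apply: polyfun_sub; first exact/polyfun_mx_adj/polyfun_mx_mul.
  by apply: polyfun_mx_mul; apply: polyfun_mx_adj.
have adjM_unitr (C D : 'M[k]_3) : C \in unitmx -> \adj (D *m C) = \adj C *m \adj D.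
  move=> uC; apply: (extend (fun V => V 0) (fun=> C) (polyfun_mx_var 0)
    (polyfun_mx_const C) _ (fun=> D)).
  by move=> V uV; apply: adjM_unit.
apply: (extend (fun=> A) (fun V => V 0) (polyfun_mx_const A) (polyfun_mx_var 0)
  _ (fun=> B)).
by move=> V uV; apply: adjM_unitr.
Qed.

End Density.

Section ExplicitThreeByThree.
Variable R : comNzRingType.

(* A 3 x 3 matrix given by a table indexed by naturals: its entries simplify
   to closed terms, on which `ring` can act. *)
Definition mx3 (e : nat -> nat -> R) : 'M[R]_3 := \matrix_(i, j) e i j.

Lemma mx3E (A : 'M[R]_3) : A = mx3 (fun i j => A (inord i) (inord j)).
Proof. by apply/matrixP => i j; rewrite mxE !inord_val. Qed.

Lemma mul_mx3 e e' : mx3 e *m mx3 e' =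
  mx3 (fun i j => e i 0 * e' 0 j + e i 1 * e' 1 j + e i 2 * e' 2 j).
Proof. by apply/matrixP => i j; rewrite !mxE !big_ord_recr big_ord0 /= !mxE add0r. Qed.

Lemma trace_mx3 e : \tr (mx3 e) = e 0 0 + e 1 1 + e 2 2.
Proof. by rewrite /mxtrace !big_ord_recr big_ord0 /= !mxE add0r. Qed.

Lemma det_mx3 e : \det (mx3 e) =
  e 0 0 * e 1 1 * e 2 2 - e 0 0 * e 1 2 * e 2 1 - e 0 1 * e 1 0 * e 2 2
  + e 0 1 * e 1 2 * e 2 0 + e 0 2 * e 1 0 * e 2 1 - e 0 2 * e 1 1 * e 2 0.
Proof.
rewrite (expand_det_row _ 0) !big_ord_recr big_ord0 /= /cofactor.
rewrite !(expand_det_row _ 0) !big_ord_recr !big_ord0 /= /cofactor !det_mx11 !mxE.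
rewrite /bump /= !expr0 !expr1 !expr2; ring.
Qed.

Lemma inord3E : (inord 0 = 0 :> 'I_3) * (inord 1 = 1 :> 'I_3) * (inord 2 = 2 :> 'I_3).
Proof. by do !split; apply: val_inj; rewrite /= inordK. Qed.

Definition next3 (i : nat) : nat := match i with 0 => 1 | 1 => 2 | _ => 0 end.

Lemma adj_mx3 e : \adj (mx3 e) = mx3 (fun i j =>
  e (next3 j) (next3 i) * e (next3 (next3 j)) (next3 (next3 i))
  - e (next3 j) (next3 (next3 i)) * e (next3 (next3 j)) (next3 i)).
Proof.
apply/matrixP => i j; rewrite !mxE /cofactor.
rewrite (expand_det_row _ 0) !big_ord_recr !big_ord0 /= /cofactor !det_mx11 !mxE.
by case: i => [[|[|[|//]]] ?]; case: j => [[|[|[|//]]] ?];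
  rewrite ?mxE /= /bump /= ?exprS ?expr0; ring.
Qed.

End ExplicitThreeByThree.

Section CrossProduct.
Variable R : comNzRingType.

(* The skew matrix of the cross product u x _; every skew 3 x 3 matrix is of
   this form. *)
Definition crossmx (u : 'rV[R]_3) : 'M[R]_3 :=
  mx3 (fun i j => match i, j with
    | 0, 1 => - u 0 (inord 2) | 0, 2 => u 0 (inord 1) | 1, 0 => u 0 (inord 2)
    | 1, 2 => - u 0 (inord 0) | 2, 0 => - u 0 (inord 1) | 2, 1 => u 0 (inord 0)
    | _, _ => 0 end).

Fact crossmx_is_linear : linear crossmx.
Proof.
move=> a u v; apply/matrixP => i j; rewrite !mxE.
by case: i => [[|[|[|//]]] ?]; case: j => [[|[|[|//]]] ?]; rewrite /= ?mxE; ring.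
Qed.

HB.instance Definition _ :=
  GRing.isLinear.Build R 'rV[R]_3 'M[R]_3 _ crossmx crossmx_is_linear.

Definition axis (M : 'M[R]_3) : 'rV[R]_3 :=
  \row_l [:: M (inord 2) (inord 1); M (inord 0) (inord 2); M (inord 1) (inord 0)]`_l.

Definition tradj (V : rep3 R) : R := \tr (V 1 *m \adj (V 0) *m V 1 *m \adj (V 2)).

Lemma tradj_crossmx (U : 'M[R]_3) :
  tradj (fun x => crossmx (row x U)) = - \det U ^+ 2.
Proof.
rewrite /tradj /crossmx !adj_mx3 !mul_mx3 trace_mx3 /= !mxE.
rewrite [in RHS](mx3E U) det_mx3 !inord3E; ring.
Qed.
End CrossProduct.

Section SkewTriples.
Variable k : fieldType.
Hypothesis k_char0 : [pchar k] =i pred0.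

(* A skew matrix has opposite symmetric entries and, as 2 != 0, a zero
   diagonal; it is the cross-product matrix of its axis. *)
Lemma skew_entry (M : 'M[k]_3) : skew_sym M -> forall i j, M j i = - M i j.
Proof. by move=> skM i j; have /matrixP/(_ i j) := skM; rewrite !mxE. Qed.

Lemma skew_diag (M : 'M[k]_3) : skew_sym M -> forall i, M i i = 0.
Proof.
move=> skM i; have /eqP := skew_entry skM i i; rewrite -addr_eq0 -mulr2n -mulr_natr.
by rewrite mulf_eq0 (iffLR (pcharf0P k) k_char0) orbF => /eqP.
Qed.

Lemma skew_crossmx (M : 'M[k]_3) : skew_sym M -> crossmx (axis M) = M.
Proof.
move=> skM; rewrite [RHS]mx3E; apply/matrixP => i j; rewrite !mxE !inordK //=.
by case: i => [[|[|[|//]]] ?]; case: j => [[|[|[|//]]] ?] /=;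
  rewrite ?skew_diag // -?(skew_entry skM) ?opprK.
Qed.

Definition axes (W : rep3 k) : 'M[k]_3 := \matrix_x axis (W x).

Lemma tradj_skew (W : rep3 k) : (forall x, skew_sym (W x)) ->
  tradj W = - \det (axes W) ^+ 2.
Proof.
by move=> skW; rewrite -tradj_crossmx /tradj /axes !rowK !skew_crossmx.
Qed.

Lemma skew_comb (W : rep3 k) (c : 'rV[k]_3) : (forall x, skew_sym (W x)) ->
  \sum_x c 0 x *: W x = crossmx (c *m axes W).
Proof.
move=> skW; rewrite mulmx_sum_row linear_sum; apply: eq_bigr => x _.
by rewrite linearZ /= /axes rowK skew_crossmx.
Qed.

(* For linearly independent skew matrices the axes are independent, so the
   semi-invariant tradj does not vanish. *)
Lemma tradj_neq0 (W : rep3 k) : (forall x, skew_sym (W x)) -> lin_indep3 W ->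
  tradj W != 0.
Proof.
move=> skW indW; rewrite tradj_skew // oppr_eq0 expf_eq0 /=.
apply/negP => /det0P [c /eqP c_nz cW0]; apply: c_nz; apply/rowP => x.
by rewrite mxE; apply: (indW (c 0)); rewrite skew_comb // cW0 linear0.
Qed.

Lemma tradj_equiv (h g : 'M[k]_3) (V : rep3 k) :
  tradj (fun x => h *m V x *m g) = (\det h * \det g) ^+ 2 * tradj V.
Proof.
rewrite /tradj !(adjM3 k_char0) !mulmxA -!(mulmxA _ g) !mul_mx_adj !mul_mx_scalar.
rewrite -!scalemxAl !mxtraceZ -(mulmxA _ (\adj h) h) mul_adj_mx mul_mx_scalar.
rewrite -!scalemxAl mxtraceZ mxtrace_mulC !mulmxA mul_adj_mx mul_scalar_mx.
by rewrite -!scalemxAl mxtraceZ; ring.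
Qed.

Lemma tradj_semi_inv : semi_inv (2%:Z, - 2%:Z) (@tradj k).
Proof.
split.
  apply: polyfun_trace; repeat apply: polyfun_mx_mul;
    by [apply: polyfun_mx_var | apply: polyfun_mx_adj (polyfun_mx_var _)].
move=> g1 g2 _ _ V; rewrite /act invmxK tradj_equiv det_inv /=.
by rewrite -exprnP -exprnN exprMn exprVn [_ ^- 2 * _]mulrC.
Qed.
End SkewTriples.

Section HomogeneousAdditive.
Variable k : fieldType.
Hypothesis k_char0 : [pchar k] =i pred0.

Lemma horner_size2 (p : {poly k}) x : (size p <= 2)%N -> p.[x] = p`_0 + p`_1 * x.
Proof.
move=> sp; rewrite (horner_coef_wide _ sp) !big_ord_recr big_ord0 /=.
by rewrite add0r expr0 mulr1 expr1.
Qed.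

(* If s |-> s p(1/s) is polynomial on the nonzero points then deg p <= 1:
   otherwise s^(n-2) q(s) = s^(n-1) p(1/s) (n = size p) would be a
   polynomial identity whose constant terms are 0 and lead_coef p. *)
Lemma size_reciprocal_le2 (p q : {poly k}) :
  (forall s, s != 0 -> q.[s] = s * p.[s^-1]) -> (size p <= 2)%N.
Proof.
move=> pq; rewrite leqNgt; apply/negP => p_big.
have [n sz_p] : exists n, size p = n.+3 by exists (size p - 3)%N; rewrite -addn3 subnK.
pose r := \sum_(i < n.+3) p`_i *: 'X^(n.+2 - i).
have qr : 'X^(n.+1) * q = r.
  apply/eqP; rewrite -subr_eq0; apply/eqP/(poly_eq0_nonzero k_char0) => s s_nz.
  rewrite hornerD hornerN hornerM hornerXn pq // mulrA -exprSr horner_coef sz_p.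
  rewrite mulr_sumr horner_sum; apply/eqP; rewrite subr_eq0; apply/eqP.
  apply: eq_bigr => i _; rewrite hornerZ hornerXn mulrCA exprVn -exprB ?unitfE //.
  by rewrite -ltnS ltn_ord.
have := congr1 (fun r : {poly k} => r`_0) qr; rewrite coefXnM /= coef_sum big_ord_recr /=.
rewrite big1 => [|i _]; last by rewrite coefZ coefXn eq_sym subn_eq0 leqNgt ltn_ord mulr0.
rewrite add0r coefZ coefXn subnn mulr1 => /esym/eqP.
have -> : p`_n.+2 = lead_coef p by rewrite /lead_coef sz_p.
by rewrite lead_coef_eq0 => /eqP p0; move: sz_p; rewrite p0 size_poly0.
Qed.

(* Along the line y + s z it
   is a polynomial p of degree <= 1, and along z + s y it is s p(1/s). *)
Lemma homogeneous_additive (M : lmodType k) (phi : M -> k) :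
  (forall a y, a != 0 -> phi (a *: y) = a * phi y) ->
  (forall y z, exists p : {poly k}, forall s, p.[s] = phi (y + s *: z)) ->
  forall y z, phi (y + z) = phi y + phi z.
Proof.
move=> phiZ phi_line y z.
have [p hp] := phi_line y z; have [q hq] := phi_line z y.
have qp s : s != 0 -> q.[s] = s * p.[s^-1].
  by move=> s_nz; rewrite hq hp -phiZ // scalerDr scalerA mulfV // scale1r addrC.
have sz_p := size_reciprocal_le2 qp.
have q_lin : q = (p`_1)%:P + p`_0 *: 'X.
  apply/eqP; rewrite -subr_eq0; apply/eqP/(poly_eq0_nonzero k_char0) => s s_nz.
  rewrite !hornerE qp // (horner_size2 _ sz_p) mulrDr mulrCA mulfV // mulr1; ring.
have phi_y : phi y = p`_0.
  by rewrite -[y]addr0 -(scale0r z) -hp (horner_size2 _ sz_p) mulr0 addr0.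
have phi_z : phi z = p`_1.
  by rewrite -[z]addr0 -(scale0r y) -hq q_lin !hornerE.
by rewrite phi_y phi_z -[z in LHS]scale1r -hp (horner_size2 _ sz_p) mulr1.
Qed.
End HomogeneousAdditive.

Section WeightOne.
Variable k : fieldType.
Hypothesis k_char0 : [pchar k] =i pred0.
Variable f : rep3 k -> k.
Hypothesis f_si : semi_inv (1%:Z, - 1%:Z) f.
Let f_polyfun : is_polyfun f := f_si.1.

Lemma semi_inv1_equiv (h g : 'M[k]_3) (V : rep3 k) :
  h \in unitmx -> g \in unitmx -> f (fun x => h *m V x *m g) = \det h * \det g * f V.
Proof.
move=> uh ug; have := f_si.2 g (invmx h) ug; rewrite unitmx_inv => /(_ uh V).
rewrite /act !invmxK det_inv /= expr1z exprN1 invrK => ->.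
by rewrite [\det g * _]mulrC.
Qed.


Definition setrow (V : rep3 k) (i : 'I_3) (y : 'M[k]_3) : rep3 k :=
  fun b => \matrix_(i', j) if i' == i then y b j else V b i' j.

(* f is additive in the i-th rows of the triple: it is homogeneous in them
   (left multiplication by a diagonal matrix) and polynomial. *)
Lemma setrowD V i y z :
  f (setrow V i (y + z)) = f (setrow V i y) + f (setrow V i z).
Proof.
apply: (homogeneous_additive k_char0 (phi := fun y => f (setrow V i y))).
- move=> a {}y a_nz.
  pose D : 'M[k]_3 := diag_mx (\row_l (if l == i then a else 1)).
  have detD : \det D = a.
    rewrite det_diag (bigD1 i) //= mxE eqxx big1 ?mulr1 // => l /negbTE l_i.
    by rewrite mxE l_i.
  have uD : D \in unitmx by rewrite unitmxE detD unitfE.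
  have := semi_inv1_equiv (setrow V i y) uD (unitmx1 _ _).
  rewrite det1 mulr1 detD => <-.
  apply: polyfun_ext f_polyfun _ => b l j; rewrite mulmx1 mul_diag_mx !mxE.
  by case: eqP => _; rewrite ?mxE ?mul1r.
- move=> {}y {}z.
  have [p hp] := polyfun_line (setrow V i y) (setrow (fun=> 0) i z) f_polyfun.
  exists p => s; rewrite hp; apply: polyfun_ext f_polyfun _ => b l j.
  by rewrite !mxE; case: eqP => _; rewrite ?mxE ?mulr0 ?addr0.
Qed.

Lemma setrow_sum V i (Y : 'I_3 -> 'M[k]_3) :
  f (setrow V i (\sum_b Y b)) = \sum_b f (setrow V i (Y b)).
Proof.
have setrow0 : f (setrow V i 0) = 0.
  by apply: (addrI (f (setrow V i 0))); rewrite addr0 -setrowD addr0.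
by elim/big_rec2: _ => [|b x y _ <-]; rewrite ?setrowD.
Qed.

Definition rowsel (V : rep3 k) (i b : 'I_3) : rep3 k :=
  fun b' => \matrix_(i', j) if (i' == i) && (b' != b) then 0 else V b' i' j.

Lemma split_row V i : f V = \sum_b f (rowsel V i b).
Proof.
pose Y b : 'M[k]_3 := \matrix_(b', j) if b' == b then V b' i j else 0.
have -> : f V = f (setrow V i (\sum_b Y b)).
  apply: polyfun_ext f_polyfun _ => x l j; rewrite !mxE summxE.
  case: eqP => [->|_] //; rewrite (bigD1 x) //= mxE eqxx big1 ?addr0 // => b /negbTE bx.
  by rewrite mxE eq_sym bx.
rewrite setrow_sum; apply: eq_bigr => b _; apply: polyfun_ext f_polyfun _ => x l j.
by rewrite !mxE; case: eqP => [->|_] //=; case: eqP => [->|_].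
Qed.

Definition tri (a0 a1 a2 : 'I_3) (i : 'I_3) : 'I_3 := nth a0 [:: a0; a1; a2] i.

Definition config (a : 'I_3 -> 'I_3) (M : 'M[k]_3) : rep3 k :=
  fun b => diag_mx (\row_i (a i == b)%:R) *m M.

Definition rowmix (a : 'I_3 -> 'I_3) (V : rep3 k) : 'M[k]_3 :=
  \matrix_(i, j) V (a i) i j.

Lemma config_entry a M b i j : config a M b i j = (a i == b)%:R * M i j.
Proof. by rewrite /config mul_diag_mx !mxE. Qed.

Lemma expand_rows V : f V =
  \sum_a0 \sum_a1 \sum_a2 f (config (tri a0 a1 a2) (rowmix (tri a0 a1 a2) V)).
Proof.
rewrite (split_row V 0); apply: eq_bigr => a0 _.
rewrite (split_row _ 1); apply: eq_bigr => a1 _.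
rewrite (split_row _ 2); apply: eq_bigr => a2 _.
apply: polyfun_ext f_polyfun _ => b i j; rewrite config_entry !mxE.
by case: i => [[|[|[|//]]] ?]; rewrite /tri /= eq_sym;
  case: eqP => [->|_]; rewrite ?mul1r ?mul0r.
Qed.

(* f (config a M) is det M times a constant: clear for invertible M by right
   multiplication, and then for all M by density. *)
Lemma config_det a M : f (config a M) = \det M * f (config a 1%:M).
Proof.
pose F (V : rep3 k) := f (config a (V 0)) - \det (V 0) * f (config a 1%:M).
suff F0 : forall V, F V = 0 by apply/eqP; rewrite -subr_eq0; apply/eqP/(F0 (fun=> M)).
apply: (polyfun_dense k_char0 (x := 0)) => [|V uV].
  apply: polyfun_sub; last exact/polyfun_mul/polyfun_const/polyfun_det/polyfun_mx_var.
  apply: polyfun_comp f_polyfun _ => b i j.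
  apply: (@polyfun_eq _ _ (fun V => (a i == b)%:R * V 0 i j)) => [V|].
    by rewrite config_entry.
  exact/polyfun_mul/polyfun_var/polyfun_const.
apply/eqP; rewrite subr_eq0; apply/eqP.
have := semi_inv1_equiv (config a 1%:M) (unitmx1 _ _) uV; rewrite det1 mul1r => <-.
by apply: polyfun_ext f_polyfun _ => b i j; rewrite mul1mx /config mulmx1.
Qed.

(* Conjugating by a permutation matrix shows that f (config a 1) is invariant
   under permutations of the rows. *)
Lemma config_perm a (s : 'S_3) : f (config (a \o s) 1%:M) = f (config a 1%:M).
Proof.
have := semi_inv1_equiv (config a 1%:M) (unitmx_perm _ s) (unitmx_perm _ s^-1).
rewrite -det_mulmx -perm_mxM mulgV perm_mx1 det1 mul1r => <-.
apply: polyfun_ext f_polyfun _ => b i j.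
rewrite -row_permE -col_permE [col_perm _ _ _ _]mxE [row_perm _ _ _ _]mxE.
by rewrite !config_entry !mxE (inj_eq perm_inj).
Qed.

Definition cycle3 : 'S_3 := perm (addIr (1 : 'I_3)).

Lemma config_cycle a0 a1 a2 :
  f (config (tri a1 a2 a0) 1%:M) = f (config (tri a0 a1 a2) 1%:M).
Proof.
rewrite -[RHS](config_perm _ cycle3); apply: polyfun_ext f_polyfun _ => b i j.
rewrite !config_entry /= permE.
by case: i => [[|[|[|//]]] ?].
Qed.

Lemma det_rowmix_skew (W : rep3 k) a0 a1 a2 : (forall x, skew_sym (W x)) ->
  \det (rowmix (tri a0 a1 a2) W) =
  W a0 0 1 * W a1 1 2 * W a2 2 0 - W a0 2 0 * W a1 0 1 * W a2 1 2.
Proof.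
move=> skW; rewrite (mx3E (rowmix _ W)) det_mx3 !mxE !inord3E /tri /=.
rewrite !(skew_diag k_char0 (skW _)) (skew_entry (skW a0) 2 0).
rewrite (skew_entry (skW a1) 0 1) (skew_entry (skW a2) 1 2); ring.
Qed.

(* Expanding along the rows, f W is a sum of terms
   c(a) det (rowmix a W), and the two cyclic terms of these determinants
   cancel after a cyclic reindexing, since c is cyclically invariant. *)
Lemma semi_inv1_skew (W : rep3 k) : (forall x, skew_sym (W x)) -> f W = 0.
Proof.
move=> skW.
pose T a0 a1 a2 := f (config (tri a0 a1 a2) 1%:M) * (W a0 0 1 * W a1 1 2 * W a2 2 0).
have -> : f W = \sum_a0 \sum_a1 \sum_a2 (T a0 a1 a2 - T a1 a2 a0).
  rewrite expand_rows; apply: eq_bigr => a0 _; apply: eq_bigr => a1 _.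
  apply: eq_bigr => a2 _; rewrite config_det det_rowmix_skew // /T.
  by rewrite (config_cycle a0 a1 a2); ring.
have cyc : \sum_a0 \sum_a1 \sum_a2 T a1 a2 a0 = \sum_a0 \sum_a1 \sum_a2 T a0 a1 a2.
  by rewrite exchange_big; apply: eq_bigr => a1 _; rewrite exchange_big.
under eq_bigr => a0 _ do under eq_bigr => a1 _ do rewrite sumrB.
under eq_bigr => a0 _ do rewrite sumrB.
by rewrite sumrB cyc subrr.
Qed.
End WeightOne.

Theorem mainTheorem11 (k : closedFieldType) (hchar : [pchar k] =i pred0)
  (W : rep3 k) (hskew : forall x, skew_sym (W x)) (hind : lin_indep3 W) :
  (exists n : nat, (0 < n)%N /\ inS W ((n%:Z)%R, (- n%:Z)%R))
  /\ ~ inS W (1%R, (-1)%R).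
Proof.
split.
- exists 2%N; split => //; exists (@tradj k).
  by split; [exact: tradj_semi_inv | exact: tradj_neq0].
- by case=> f [f_si]; rewrite (semi_inv1_skew hchar f_si hskew) eqxx.
Qed.
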